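(* Call a group a generalized torsion group if every non-trivial element of it is a generalized torsion element. Then: (i) every quotient of a generalized torsion group is a generalized torsion group; (ii) the direct limit of a directed system of generalized torsion groups is a generalized torsion group; (iii) if $1\to K\to G\to Q\to 1$ is an exact sequence of groups with $K$ and $Q$ generalized torsion groups, then $G$ is a generalized torsion group; (iv) there exists a generalized torsion group having a subgroup which is not a generalized torsion group.
   Context: For $g,x$ in a group, $g^{x}:=xgx^{-1}$. A non-trivial element $g$ of a group $G$ is a generalized torsion element if there exist a positive integer $n$ and $x_1,\ldots,x_n\in G$ with $g^{x_1}g^{x_2}\cdots g^{x_n}=1$. *)

From Stdlib Require Import List.
Import ListNotations.

Record Group : Type := {
  carrier :> Type;
  gmul : carrier -> carrier -> carrier;
  gone : carrier;
  ginv : carrier -> carrier;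
  gmul_assoc : forall x y z, gmul x (gmul y z) = gmul (gmul x y) z;
  gmul_1l : forall x, gmul gone x = x;
  gmul_1r : forall x, gmul x gone = x;
  gmul_Vl : forall x, gmul (ginv x) x = gone;
  gmul_Vr : forall x, gmul x (ginv x) = gone
}.

Arguments gmul {g} _ _.
Arguments gone {g}.
Arguments ginv {g} _.

Definition gconj {G : Group} (g x : G) : G := gmul (gmul x g) (ginv x).

Definition gprod {G : Group} (l : list G) : G := fold_right gmul gone l.

Definition gen_torsion_elt {G : Group} (g : G) : Prop :=
  g <> gone /\
  exists xs : list G, xs <> [] /\ gprod (map (gconj g) xs) = gone.

Definition gen_torsion_group (G : Group) : Prop :=
  forall g : G, g <> gone -> gen_torsion_elt g.

Definition is_hom {G H : Group} (f : G -> H) : Prop :=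
  forall x y : G, f (gmul x y) = gmul (f x) (f y).

Record directed_system (I : Type) (le : I -> I -> Prop)
    (G : I -> Group) (phi : forall i j, le i j -> G i -> G j) : Prop := {
  ds_inhabited : inhabited I;
  ds_refl : forall i, le i i;
  ds_trans : forall i j k, le i j -> le j k -> le i k;
  ds_directed : forall i j, exists k, le i k /\ le j k;
  ds_hom : forall i j (h : le i j), is_hom (phi i j h);
  ds_id : forall i (h : le i i) (x : G i), phi i i h x = x;
  ds_comp : forall i j k (hij : le i j) (hjk : le j k) (hik : le i k) (x : G i),
      phi j k hjk (phi i j hij x) = phi i k hik x
}.

(* (L, f) is a direct limit of the directed system: the f_i are compatible
   homomorphisms, L is the union of their images, and two elements are
   identified in L exactly when they become equal at some later stage
   (the standard description L = (disjoint union of the G_i) / ~). *)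
Record is_direct_limit (I : Type) (le : I -> I -> Prop)
    (G : I -> Group) (phi : forall i j, le i j -> G i -> G j)
    (L : Group) (f : forall i, G i -> L) : Prop := {
  dl_hom : forall i, is_hom (f i);
  dl_compat : forall i j (h : le i j) (x : G i), f j (phi i j h x) = f i x;
  dl_cover : forall y : L, exists i (x : G i), f i x = y;
  dl_ident : forall i j (x : G i) (y : G j), f i x = f j y ->
      exists k (hik : le i k) (hjk : le j k), phi i k hik x = phi j k hjk y
}.

(** Generalized torsion is a positive, existential property of a single element: a
    relation [g^{x_1} ... g^{x_n} = 1] is carried to a relation of the same shape by any
    homomorphism.  Hence a group that is covered by homomorphic images of generalized
    torsion groups (a quotient, or a direct limit) is one itself.  For an extension
    [1 -> K -> G -> Q -> 1] and [g] outside [K], lift a relation of the image of [g] in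
    [Q]: the product [w = g^{x_1} ... g^{x_n}] lies in [K], so either [w = 1] or
    [w^{y_1} ... w^{y_m} = 1] for some [y_j], and expanding the conjugates of [w] gives
    the relation [prod_j prod_i g^{y_j x_i} = 1] for [g].  Finally the infinite dihedral
    group is a generalized torsion group (reflections are involutions and a reflection
    inverts every rotation), while in its abelian subgroup [Z] of rotations a product of
    [n] conjugates of [1] is [n]. *)

From Stdlib Require Import List ZArith Lia Classical.
Import ListNotations.

Section GroupLemmas.
Variable G : Group.

Lemma ginv_unique (a b : G) : gmul a b = gone -> b = ginv a.
Proof.
  intro Eab.
  rewrite <- (gmul_1l G b), <- (gmul_Vl G a), <- gmul_assoc, Eab, gmul_1r.
  reflexivity.
Qed.

Lemma ginvM (a b : G) : ginv (gmul a b) = gmul (ginv b) (ginv a).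
Proof.
  symmetry; apply ginv_unique.
  rewrite <- gmul_assoc, (gmul_assoc G b), gmul_Vr, gmul_1l, gmul_Vr.
  reflexivity.
Qed.

Lemma gprod_cat (l1 l2 : list G) : gprod (l1 ++ l2) = gmul (gprod l1) (gprod l2).
Proof.
  induction l1 as [|a l1 IH]; simpl.
  - now rewrite gmul_1l.
  - now rewrite IH, gmul_assoc.
Qed.

Lemma gprod_concat (ls : list (list G)) : gprod (concat ls) = gprod (map gprod ls).
Proof.
  induction ls as [|l ls IH]; simpl; [reflexivity|].
  now rewrite gprod_cat, IH.
Qed.

Lemma gconj1 (y : G) : gconj gone y = gone.
Proof. unfold gconj. now rewrite gmul_1r, gmul_Vr. Qed.

Lemma gconjM (a b y : G) : gconj (gmul a b) y = gmul (gconj a y) (gconj b y).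
Proof.
  unfold gconj. rewrite !gmul_assoc.
  rewrite <- (gmul_assoc G _ (ginv y) y), gmul_Vl, gmul_1r.
  reflexivity.
Qed.

Lemma gconj_gprod (l : list G) (y : G) :
  gconj (gprod l) y = gprod (map (fun a => gconj a y) l).
Proof.
  induction l as [|a l IH]; simpl.
  - apply gconj1.
  - now rewrite gconjM, IH.
Qed.

Lemma gconjJ (g x y : G) : gconj (gconj g x) y = gconj g (gmul y x).
Proof. unfold gconj. now rewrite ginvM, !gmul_assoc. Qed.

Lemma gprod_conj_concat (g : G) (xs ys : list G) :
  gprod (map (gconj g) (concat (map (fun y => map (gmul y) xs) ys)))
  = gprod (map (gconj (gprod (map (gconj g) xs))) ys).
Proof.
  rewrite concat_map, map_map, gprod_concat, map_map.
  f_equal; apply map_ext; intro y.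
  rewrite gconj_gprod, !map_map.
  f_equal; apply map_ext; intro x.
  symmetry; apply gconjJ.
Qed.

Lemma gen_torsion_elt_of_conj_prod (g : G) (xs : list G) :
  g <> gone -> xs <> [] ->
  gprod (map (gconj g) xs) = gone \/ gen_torsion_elt (gprod (map (gconj g) xs)) ->
  gen_torsion_elt g.
Proof.
  intros g1 xs_nil [w1 | [_ [ys [ys_nil Ew]]]]; split; auto.
  - now exists xs.
  - exists (concat (map (fun y => map (gmul y) xs) ys)); split.
    + destruct ys as [|y ys]; [congruence|].
      destruct xs as [|x xs]; [congruence|].
      discriminate.
    + now rewrite gprod_conj_concat.
Qed.

End GroupLemmas.

Section Homomorphisms.
Variables G H : Group.
Variable h : G -> H.
Hypothesis h_hom : is_hom h.

Lemma hom1 : h gone = gone.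
Proof.
  assert (idem : gmul (h gone) (h gone) = h gone) by now rewrite <- h_hom, gmul_1l.
  transitivity (gmul (ginv (h gone)) (gmul (h gone) (h gone))).
  - now rewrite gmul_assoc, gmul_Vl, gmul_1l.
  - now rewrite idem, gmul_Vl.
Qed.

Lemma homV (x : G) : h (ginv x) = ginv (h x).
Proof. apply ginv_unique. now rewrite <- h_hom, gmul_Vr, hom1. Qed.

Lemma hom_gconj (g x : G) : h (gconj g x) = gconj (h g) (h x).
Proof. unfold gconj. now rewrite !h_hom, homV. Qed.

Lemma hom_gprod_conj (g : G) (xs : list G) :
  h (gprod (map (gconj g) xs)) = gprod (map (gconj (h g)) (map h xs)).
Proof.
  induction xs as [|x xs IH]; simpl.
  - apply hom1.
  - now rewrite h_hom, IH, hom_gconj.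
Qed.

Lemma hom_gen_torsion_elt (g : G) :
  gen_torsion_elt g -> h g <> gone -> gen_torsion_elt (h g).
Proof.
  intros [_ [xs [xs_nil Exs]]] hg1; split; auto.
  exists (map h xs); split.
  - destruct xs; simpl; congruence.
  - now rewrite <- hom_gprod_conj, Exs, hom1.
Qed.

Lemma hom_gen_torsion_group (x : G) :
  gen_torsion_group G -> h x = gone \/ gen_torsion_elt (h x).
Proof.
  intro G_gt.
  destruct (classic (h x = gone)) as [hx1 | hx1]; [now left | right].
  apply hom_gen_torsion_elt; auto.
  apply G_gt; intros ->; apply hx1, hom1.
Qed.

End Homomorphisms.

Lemma gen_torsion_group_covered (L : Group) :
  (forall y : L, exists (G : Group) (h : G -> L) (x : G),
      is_hom h /\ gen_torsion_group G /\ h x = y) ->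
  gen_torsion_group L.
Proof.
  intros cover y y1.
  destruct (cover y) as [G [h [x [h_hom [G_gt <-]]]]].
  now destruct (hom_gen_torsion_group G L h h_hom x G_gt).
Qed.

Lemma gen_torsion_group_quotient (G Q : Group) (p : G -> Q) :
  is_hom p -> (forall q : Q, exists g : G, p g = q) ->
  gen_torsion_group G -> gen_torsion_group Q.
Proof.
  intros p_hom p_surj G_gt.
  apply gen_torsion_group_covered; intro q.
  destruct (p_surj q) as [g Eg].
  now exists G, p, g.
Qed.

Lemma gen_torsion_group_direct_limit (I : Type) (le : I -> I -> Prop)
    (G : I -> Group) (phi : forall i j, le i j -> G i -> G j)
    (L : Group) (f : forall i, G i -> L) :
  is_direct_limit I le G phi L f ->
  (forall i, gen_torsion_group (G i)) -> gen_torsion_group L.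
Proof.
  intros lim G_gt.
  apply gen_torsion_group_covered; intro y.
  destruct (dl_cover _ _ _ _ _ _ lim y) as [i [x Ex]].
  exists (G i), (f i), x.
  split; [apply (dl_hom _ _ _ _ _ _ lim) | now split].
Qed.

Lemma map_surjective (G Q : Group) (p : G -> Q) :
  (forall q, exists g, p g = q) -> forall qs, exists xs, map p xs = qs.
Proof.
  intros p_surj qs.
  induction qs as [|q qs [xs Exs]]; [now exists []|].
  destruct (p_surj q) as [x Ex].
  exists (x :: xs); simpl; congruence.
Qed.

Section Extension.
Variables K G Q : Group.
Variables (i : K -> G) (p : G -> Q).
Hypotheses (i_hom : is_hom i) (p_hom : is_hom p).
Hypothesis p_surj : forall q : Q, exists g : G, p g = q.
Hypothesis p_kernel : forall g : G, p g = gone <-> exists k : K, i k = g.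
Hypotheses (K_gt : gen_torsion_group K) (Q_gt : gen_torsion_group Q).

Lemma extension_conj_prod_in_kernel (g : G) :
  p g <> gone -> exists xs, xs <> [] /\ p (gprod (map (gconj g) xs)) = gone.
Proof.
  intro pg1.
  destruct (Q_gt _ pg1) as [_ [qs [qs_nil Eqs]]].
  destruct (map_surjective G Q p p_surj qs) as [xs <-].
  exists xs; split.
  - now destruct xs.
  - now rewrite hom_gprod_conj.
Qed.

Lemma gen_torsion_group_extension : gen_torsion_group G.
Proof.
  intros g g1.
  destruct (classic (p g = gone)) as [pg1 | pg1].
  - destruct (proj1 (p_kernel g) pg1) as [k <-].
    now destruct (hom_gen_torsion_group K G i i_hom k K_gt).
  - destruct (extension_conj_prod_in_kernel g pg1) as [xs [xs_nil pw1]].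
    destruct (proj1 (p_kernel _) pw1) as [k Ek].
    apply (gen_torsion_elt_of_conj_prod G g xs g1 xs_nil).
    rewrite <- Ek.
    now apply hom_gen_torsion_group.
Qed.

End Extension.

Definition Z_group : Group :=
  {| carrier := Z; gmul := Z.add; gone := 0%Z; ginv := Z.opp;
     gmul_assoc := Z.add_assoc; gmul_1l := Z.add_0_l; gmul_1r := Z.add_0_r;
     gmul_Vl := Z.add_opp_diag_l; gmul_Vr := Z.add_opp_diag_r |}.

Lemma Z_group_gprod_conj1 (xs : list Z_group) :
  gprod (map (gconj (1%Z : Z_group)) xs) = Z.of_nat (length xs).
Proof.
  induction xs as [|x xs IH]; [reflexivity|].
  change (gconj (1%Z : Z_group) x + gprod (map (gconj (1%Z : Z_group)) xs)
          = Z.of_nat (S (length xs)))%Z.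
  rewrite IH; unfold gconj; simpl; lia.
Qed.

Lemma Z_group_not_gen_torsion : ~ gen_torsion_group Z_group.
Proof.
  intro Z_gt.
  destruct (Z_gt (1%Z : Z_group)) as [_ [xs [xs_nil E]]]; [discriminate|].
  rewrite Z_group_gprod_conj1 in E.
  destruct xs; [congruence|].
  simpl in E; lia.
Qed.

(* [(n, false)] is the rotation by [n], [(n, true)] the reflection [m |-> n - m]. *)
Definition dihedral_mul (a b : Z * bool) : Z * bool :=
  let (n, x) := a in let (m, y) := b in ((n + if x then - m else m)%Z, xorb x y).

Definition dihedral_inv (a : Z * bool) : Z * bool :=
  let (n, x) := a in ((if x then n else - n)%Z, x).

Definition dihedral_inf : Group.
Proof.
  refine (@Build_Group (Z * bool) dihedral_mul (0%Z, false) dihedral_inv _ _ _ _ _).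
  all: intros [n x]; try intros [m y]; try intros [k z].
  all: destruct x; try destruct y; try destruct z; simpl; f_equal; lia.
Defined.

Lemma dihedral_inf_gen_torsion : gen_torsion_group dihedral_inf.
Proof.
  intros [n x] g1; split; auto.
  destruct x.
  - exists [(0%Z, false); (0%Z, false)]; split; [discriminate|].
    simpl; f_equal; lia.
  - exists [(0%Z, false); (0%Z, true)]; split; [discriminate|].
    simpl; f_equal; lia.
Qed.

Lemma Z_group_dihedral_inf_embedding :
  is_hom (fun n : Z_group => ((n, false) : dihedral_inf)) /\
  (forall a b : Z_group, ((a, false) : dihedral_inf) = (b, false) -> a = b).
Proof.
  split.
  - intros a b; reflexivity.
  - intros a b E; congruence.
Qed.

Theorem theorem3p2 :
  (* (i) quotients (= surjective homomorphic images) *)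
  (forall (G Q : Group) (p : G -> Q),
      is_hom p -> (forall q : Q, exists g : G, p g = q) ->
      gen_torsion_group G -> gen_torsion_group Q) /\
  (* (ii) direct limits of directed systems *)
  (forall (I : Type) (le : I -> I -> Prop) (G : I -> Group)
          (phi : forall i j, le i j -> G i -> G j) (L : Group)
          (f : forall i, G i -> L),
      directed_system I le G phi -> is_direct_limit I le G phi L f ->
      (forall i, gen_torsion_group (G i)) -> gen_torsion_group L) /\
  (* (iii) extensions: 1 -> K -> G -> Q -> 1 exact *)
  (forall (K G Q : Group) (i : K -> G) (p : G -> Q),
      is_hom i -> is_hom p ->
      (forall a b : K, i a = i b -> a = b) ->
      (forall q : Q, exists g : G, p g = q) ->
      (forall g : G, p g = gone <-> exists k : K, i k = g) ->
      gen_torsion_group K -> gen_torsion_group Q -> gen_torsion_group G) /\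
  (* (iv) a generalized torsion group with a subgroup (= injective
     homomorphic copy) that is not a generalized torsion group *)
  (exists (G H : Group) (j : H -> G),
      is_hom j /\ (forall a b : H, j a = j b -> a = b) /\
      gen_torsion_group G /\ ~ gen_torsion_group H).
Proof.
  split; [|split; [|split]].
  - exact gen_torsion_group_quotient.
  - intros I le G phi L f _.
    apply gen_torsion_group_direct_limit.
  - intros K G Q i p i_hom p_hom _.
    apply gen_torsion_group_extension; assumption.
  - exists dihedral_inf, Z_group, (fun n => (n, false)).
    destruct Z_group_dihedral_inf_embedding as [j_hom j_inj].
    split; [exact j_hom | split; [exact j_inj | split]].
    + exact dihedral_inf_gen_torsion.
    + exact Z_group_not_gen_torsion.
Qed.
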